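(* Let $P\in\mathcal{RP}$ and assume $x_P^+\notin X_P^-$, $x_P^-\notin X_P^+$, $y_P^+\notin Y_P^-$, $y_P^-\notin Y_P^+$. Suppose that for every choice of integers $n_x$ ($x\in X_P\setminus\{0\}$) and $m_y$ ($y\in Y_P\setminus\{0\}$), not all zero, with $n_{x_P^+}\cdot n_{x_P^-}\ge0$ and $m_{y_P^+}\cdot m_{y_P^-}\ge0$ (an index equal to $0$ being omitted), we have $$\sum_{x\in X_P\setminus\{0\}}n_x x-\sum_{y\in Y_P\setminus\{0\}}m_y y\neq0.$$ Then $P$ is not resonant.
   Context: $\mathcal{RP}$ is the family of bounded planar polygons (not necessarily connected or simply connected) whose boundary is a finite union of vertical and horizontal segments. For $P\in\mathcal{RP}$: $X_P^+$ is the set of non-negative first coordinates of vertical sides of $P$; $X_P^-$ is the set of numbers $-x$ where $x<0$ is the first coordinate of a vertical side; $Y_P^+$, $Y_P^-$ are defined analogously from second coordinates of horizontal sides; $X_P=X_P^+\cup X_P^-$, $Y_P=Y_P^+\cup Y_P^-$; $x_P^\pm=\max X_P^\pm$, $y_P^\pm=\max Y_P^\pm$ with the convention $\max\emptyset=0$. The billiard flow on $P$ in directions $\pm\pi/4,\pm3\pi/4$ moves points with unit speed along these diagonal directions and reflects elastically off the sides. $P$ is resonant if this billiard flow has an orbit segment joining two (not necessarily distinct) corners of $P$. *)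

From Stdlib Require Import Reals Lra List.
Open Scope R_scope.

Definition pt := (R * R)%type.

(* Topology of the plane (sup-norm boxes, same topology as Euclidean). *)
Definition interiorP (P : pt -> Prop) (p : pt) : Prop :=
  exists e, 0 < e /\ forall q : pt,
    Rabs (fst q - fst p) < e -> Rabs (snd q - snd p) < e -> P q.

Definition closureP (P : pt -> Prop) (p : pt) : Prop :=
  forall e, 0 < e -> exists q : pt,
    P q /\ Rabs (fst q - fst p) < e /\ Rabs (snd q - snd p) < e.

Definition boundaryP (P : pt -> Prop) (p : pt) : Prop :=
  closureP P p /\ ~ interiorP P p.

(* The family RP: nonempty finite unions of closed axis-parallel rectangles
   [a,b] x [c,d] with a < b, c < d (= bounded closed rectilinear polygons,
   not necessarily connected or simply connected). *)
Definition in_rect (r : (R * R) * (R * R)) (p : pt) : Prop :=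
  fst (fst r) <= fst p <= snd (fst r) /\ fst (snd r) <= snd p <= snd (snd r).

Definition is_RP (P : pt -> Prop) : Prop :=
  exists rs : list ((R * R) * (R * R)),
    rs <> nil /\
    (forall r, In r rs -> fst (fst r) < snd (fst r) /\ fst (snd r) < snd (snd r)) /\
    (forall p, P p <-> exists r, In r rs /\ in_rect r p).

Definition on_vside (P : pt -> Prop) (p : pt) : Prop :=
  exists c d, c < d /\ c <= snd p <= d /\
    forall t, c <= t <= d -> boundaryP P (fst p, t).

Definition on_hside (P : pt -> Prop) (p : pt) : Prop :=
  exists a b, a < b /\ a <= fst p <= b /\
    forall t, a <= t <= b -> boundaryP P (t, snd p).

Definition vside_x (P : pt -> Prop) (x : R) : Prop :=
  exists c d, c < d /\ forall t, c <= t <= d -> boundaryP P (x, t).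

Definition hside_y (P : pt -> Prop) (y : R) : Prop :=
  exists a b, a < b /\ forall t, a <= t <= b -> boundaryP P (t, y).

Definition XPp P (x : R) : Prop := 0 <= x /\ vside_x P x.
Definition XPm P (x : R) : Prop := exists x', x' < 0 /\ vside_x P x' /\ x = - x'.
Definition YPp P (y : R) : Prop := 0 <= y /\ hside_y P y.
Definition YPm P (y : R) : Prop := exists y', y' < 0 /\ hside_y P y' /\ y = - y'.
Definition XP P (x : R) : Prop := XPp P x \/ XPm P x.
Definition YP P (y : R) : Prop := YPp P y \/ YPm P y.

(* r = max A, with the convention max (empty) = 0. *)
Definition is_max0 (A : R -> Prop) (r : R) : Prop :=
  (A r /\ forall z, A z -> z <= r) \/ ((forall z, ~ A z) /\ r = 0).

Definition corner (P : pt -> Prop) (p : pt) : Prop :=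
  on_vside P p /\ on_hside P p.

(* Resonance: an orbit segment of the diagonal billiard flow joining two
   (not necessarily distinct) corners. *)
Definition resonant (P : pt -> Prop) : Prop :=
  exists (k : nat) (p : nat -> pt) (sx sy : nat -> R),
    (0 < k)%nat /\ corner P (p 0%nat) /\ corner P (p k) /\
    (forall i, (i < k)%nat ->
       (sx i = 1 \/ sx i = -1) /\ (sy i = 1 \/ sy i = -1) /\
       exists t, 0 < t /\
         p (S i) = (fst (p i) + t * sx i, snd (p i) + t * sy i) /\
         forall u, 0 < u < t ->
           interiorP P (fst (p i) + u * sx i, snd (p i) + u * sy i)) /\
    (forall i, (0 < i < k)%nat ->
       boundaryP P (p i) /\ ~ corner P (p i) /\
       (on_vside P (p i) -> sx i = - sx (pred i) /\ sy i = sy (pred i)) /\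
       (on_hside P (p i) -> sy i = - sy (pred i) /\ sx i = sx (pred i))).

Definition zsum (f : R -> Z) (l : list R) : R :=
  fold_right Rplus 0 (map (fun x => IZR (f x) * x) l).

(* Along a diagonal billiard orbit both coordinates move with unit speed, so the
   x- and y-coordinates are paths on a line, reflected at vertical resp.
   horizontal sides, with the same total duration T > 0.  Unfolding a reflected
   path writes T as an integer combination of the points where it starts, turns
   and ends, with weight +-1 or +-2 according to the side from which the point is
   approached.  Folding negative coordinates onto X_P gives integers n_x with
   sum n_x x = T, and likewise m_y with sum m_y y = T.  The sides x_P^+ and x_P^-
   can only be approached from inside the polygon and, by the hypotheses
   x_P^+ \notin X_P^- and x_P^- \notin X_P^+, are not hit by mirrored points, so
   n_{x_P^+}, n_{x_P^-} >= 0; the same holds for y.  The assumed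
   non-vanishing then contradicts sum n_x x - sum m_y y = T - T = 0. *)

From Stdlib Require Import Reals List Lra Lia ZArith Classical.
Open Scope R_scope.

Definition rect := ((R * R) * (R * R))%type.

Definition near (e : R) (p q : pt) : Prop :=
  Rabs (fst q - fst p) < e /\ Rabs (snd q - snd p) < e.

Lemma Rabs_lt_iff u e : Rabs u < e <-> - e < u < e.
Proof. unfold Rabs; destruct (Rcase_abs u); split; intros; lra. Qed.

Lemma Rabs_ge_cases u e : e <= Rabs u -> e <= u \/ e <= - u.
Proof. unfold Rabs; destruct (Rcase_abs u); lra. Qed.

Ltac unfold_abs := repeat match goal with
  | H : Rabs _ < _ |- _ => apply Rabs_lt_iff in H
  | H : _ <= Rabs _ |- _ => apply Rabs_ge_cases in H
  | |- Rabs _ < _ => apply Rabs_lt_iff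
  end.

Lemma finite_separation (L : list R) (z : R) :
  exists e, 0 < e /\ forall v, In v L -> v <> z -> e <= Rabs (v - z).
Proof.
  induction L as [|v L [e [He HL]]].
  - exists 1; split; [lra | intros v []].
  - destruct (Req_dec v z) as [<-|Hvz].
    + exists e; split; [exact He|]. intros w [<-|Hw] Hwz; [congruence | auto].
    + assert (Hd : 0 < Rabs (v - z)) by (apply Rabs_pos_lt; lra).
      exists (Rmin e (Rabs (v - z))); split; [now apply Rmin_glb_lt|].
      intros w [<-|Hw] Hwz; [apply Rmin_r|].
      eapply Rle_trans; [apply Rmin_l | auto].
Qed.

Lemma exists_not_In_interval (L : list R) c d :
  c < d -> exists t, c < t < d /\ ~ In t L.
Proof.
  revert c d; induction L as [|v L IH]; intros c d Hcd.
  - exists ((c + d) / 2); split; [lra | intros []].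
  - destruct (Rle_dec v ((c + d) / 2)) as [Hv|Hv].
    + destruct (IH ((c + d) / 2) d ltac:(lra)) as [t [Ht Hn]].
      exists t; split; [lra|]. intros [<-|H]; [lra | auto].
    + destruct (IH c ((c + d) / 2) ltac:(lra)) as [t [Ht Hn]].
      exists t; split; [lra|]. intros [<-|H]; [lra | auto].
Qed.

Lemma list_argmax {A} (l : list A) (f : A -> R) :
  l <> nil -> exists v, In v l /\ forall r, In r l -> f r <= f v.
Proof.
  induction l as [|w l IH]; intros Hl; [congruence|].
  destruct l as [|w' l'].
  - exists w; split; [now left|]. intros r [->|[]]; lra.
  - destruct IH as [v [Hv Hmax]]; [discriminate|].
    destruct (Rle_dec (f w) (f v)) as [Hle|Hle].
    + exists v; split; [now right|]. intros r [->|Hr]; [lra | auto].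
    + exists w; split; [now left|]. intros r [->|Hr]; [lra|].
      specialize (Hmax r Hr); lra.
Qed.

Lemma list_of_finite_pred (L : list R) (Q : R -> Prop) :
  (forall x, Q x -> In x L) -> exists l, NoDup l /\ forall x, In x l <-> Q x.
Proof.
  revert Q; induction L as [|v L IH]; intros Q HQ.
  - exists nil; split; [constructor|]. intros x; split; [intros [] | intros Hx; exact (HQ x Hx)].
  - destruct (IH (fun x => Q x /\ x <> v)) as [l [Hnd Hl]].
    { intros x [Hx Hxv]. destruct (HQ x Hx) as [<-|H]; [congruence | auto]. }
    destruct (classic (Q v)) as [Qv|Qv].
    + exists (v :: l); split.
      * constructor; [|auto]. intros Hin; apply Hl in Hin; tauto.
      * intros x; split.
        -- intros [<-|Hx]; [auto|]. apply Hl in Hx; tauto.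
        -- intros Hx. destruct (Req_dec x v) as [->|Hne]; [now left | right; now apply Hl].
    + exists l; split; [auto|]. intros x; rewrite Hl; split; [tauto|].
      intros Hx; split; [auto|]. intros ->; contradiction.
Qed.

Lemma interior_mem P p : interiorP P p -> P p.
Proof. intros [e [He H]]. apply H; unfold_abs; lra. Qed.

Lemma closure_of_mem (P : pt -> Prop) p : P p -> closureP P p.
Proof. intros Hp e He. exists p; split; [auto|]. split; unfold_abs; lra. Qed.

Lemma not_interior_of_outside_points (P : pt -> Prop) p :
  (forall eps, 0 < eps -> exists q, ~ P q /\ near eps p q) ->
  ~ interiorP P p.
Proof.
  intros Hout [eps [Heps Hint]].
  destruct (Hout eps Heps) as [q [Hq [H1 H2]]]. exact (Hq (Hint q H1 H2)).
Qed.

Lemma vside_x_of_extreme_edge (P : pt -> Prop) s b c d :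
  (s = 1 \/ s = -1) -> c < d -> (forall t, c <= t <= d -> P (b, t)) ->
  (forall q, P q -> s * fst q <= s * b) -> vside_x P b.
Proof.
  intros Hs Hcd Hseg Hside. exists c, d; split; [exact Hcd|].
  intros t Ht; split; [now apply closure_of_mem, Hseg|].
  apply not_interior_of_outside_points. intros eps Heps.
  exists (b + s * (eps / 2), t); simpl; split.
  - intros Hq. specialize (Hside _ Hq); simpl in Hside.
    destruct Hs as [->| ->]; lra.
  - unfold near; simpl; split; unfold_abs; destruct Hs as [->| ->]; lra.
Qed.

Lemma hside_y_of_extreme_edge (P : pt -> Prop) s b c d :
  (s = 1 \/ s = -1) -> c < d -> (forall t, c <= t <= d -> P (t, b)) ->
  (forall q, P q -> s * snd q <= s * b) -> hside_y P b.
Proof.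
  intros Hs Hcd Hseg Hside. exists c, d; split; [exact Hcd|].
  intros t Ht; split; [now apply closure_of_mem, Hseg|].
  apply not_interior_of_outside_points. intros eps Heps.
  exists (t, b + s * (eps / 2)); simpl; split.
  - intros Hq. specialize (Hside _ Hq); simpl in Hside.
    destruct Hs as [->| ->]; lra.
  - unfold near; simpl; split; unfold_abs; destruct Hs as [->| ->]; lra.
Qed.

(** * Finite unions of rectangles *)

Definition xedges (rs : list rect) : list R :=
  map (fun r => fst (fst r)) rs ++ map (fun r => snd (fst r)) rs.
Definition yedges (rs : list rect) : list R :=
  map (fun r => fst (snd r)) rs ++ map (fun r => snd (snd r)) rs.

Lemma edges_In rs r : In r rs ->
  (In (fst (fst r)) (xedges rs) /\ In (snd (fst r)) (xedges rs)) /\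
  (In (fst (snd r)) (yedges rs) /\ In (snd (snd r)) (yedges rs)).
Proof.
  intros Hr; unfold xedges, yedges; repeat split; apply in_or_app;
    [left | right | left | right]; exact (in_map _ _ _ Hr).
Qed.

Definition separated (rs : list rect) (e : R) (p : pt) : Prop :=
  (forall v, In v (xedges rs) -> v <> fst p -> e <= Rabs (v - fst p)) /\
  (forall v, In v (yedges rs) -> v <> snd p -> e <= Rabs (v - snd p)).

Lemma separated_exists rs p : exists e, 0 < e /\ separated rs e p.
Proof.
  destruct (finite_separation (xedges rs) (fst p)) as [ex [Hex Hx]].
  destruct (finite_separation (yedges rs) (snd p)) as [ey [Hey Hy]].
  exists (Rmin ex ey); split; [now apply Rmin_glb_lt|]. split.
  - intros v Hv Hne. eapply Rle_trans; [apply Rmin_l | auto].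
  - intros v Hv Hne. eapply Rle_trans; [apply Rmin_r | auto].
Qed.

Lemma separated_rect rs e p a b c d : separated rs e p -> In ((a, b), (c, d)) rs ->
  (a <> fst p -> e <= Rabs (a - fst p)) /\ (b <> fst p -> e <= Rabs (b - fst p)) /\
  (c <> snd p -> e <= Rabs (c - snd p)) /\ (d <> snd p -> e <= Rabs (d - snd p)).
Proof.
  intros [Hx Hy] Hr. destruct (edges_In _ _ Hr) as [[Ha Hb] [Hc Hd]].
  repeat split; [apply Hx | apply Hx | apply Hy | apply Hy]; auto.
Qed.

Definition extends_beyond (al be : bool) (r : rect) (p : pt) : Prop :=
  (if al then fst p < snd (fst r) else fst (fst r) < fst p) /\
  (if be then snd p < snd (snd r) else fst (snd r) < snd p).

Definition quadrant_filled (rs : list rect) (p : pt) (al be : bool) : Prop :=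
  exists r, In r rs /\ in_rect r p /\ extends_beyond al be r p.

Definition toward (al : bool) (u v : R) : Prop := if al then u <= v else v <= u.
Definition strictly_toward (al : bool) (u v : R) : Prop := if al then u < v else v < u.

Definition interior_xs (P : pt -> Prop) (z : R) : Prop := exists w, interiorP P (z, w).
Definition interior_ys (P : pt -> Prop) (z : R) : Prop := exists w, interiorP P (w, z).

Section Polygon.

Variable P : pt -> Prop.
Variable rs : list rect.
Hypothesis rs_nondegenerate :
  forall r, In r rs -> fst (fst r) < snd (fst r) /\ fst (snd r) < snd (snd r).
Hypothesis P_union : forall p, P p <-> exists r, In r rs /\ in_rect r p.

Section NearPoint.

Variables (p : pt) (e : R).
Hypothesis e_pos : 0 < e.
Hypothesis p_separated : separated rs e p.

Lemma in_rect_of_near r q : In r rs -> near e p q -> in_rect r q -> in_rect r p.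
Proof.
  destruct r as [[a b] [c d]]; intros Hr [Hqx Hqy] Hq.
  destruct (separated_rect _ _ _ _ _ _ _ p_separated Hr) as [Sa [Sb [Sc Sd]]].
  unfold in_rect in *; simpl in *. unfold_abs.
  repeat split.
  - destruct (Rle_dec a (fst p)) as [|Hn]; [auto|].
    destruct (Rabs_ge_cases _ _ (Sa ltac:(lra))); lra.
  - destruct (Rle_dec (fst p) b) as [|Hn]; [auto|].
    destruct (Rabs_ge_cases _ _ (Sb ltac:(lra))); lra.
  - destruct (Rle_dec c (snd p)) as [|Hn]; [auto|].
    destruct (Rabs_ge_cases _ _ (Sc ltac:(lra))); lra.
  - destruct (Rle_dec (snd p) d) as [|Hn]; [auto|].
    destruct (Rabs_ge_cases _ _ (Sd ltac:(lra))); lra.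
Qed.

Lemma mem_of_filled_quadrant al be q : quadrant_filled rs p al be -> near e p q ->
  toward al (fst p) (fst q) -> toward be (snd p) (snd q) -> P q.
Proof.
  intros [[[a b] [c d]] [Hr [Hp Hext]]] [Hqx Hqy] Hx Hy.
  apply P_union; exists ((a, b), (c, d)); split; [exact Hr|].
  destruct (separated_rect _ _ _ _ _ _ _ p_separated Hr) as [Sa [Sb [Sc Sd]]].
  unfold in_rect, extends_beyond, toward in *; simpl in *. unfold_abs.
  destruct Hext as [Ex Ey].
  destruct al;
    [destruct (Rabs_ge_cases _ _ (Sb ltac:(lra))) | destruct (Rabs_ge_cases _ _ (Sa ltac:(lra)))];
  (destruct be;
    [destruct (Rabs_ge_cases _ _ (Sd ltac:(lra))) | destruct (Rabs_ge_cases _ _ (Sc ltac:(lra)))]);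
  lra.
Qed.

Lemma not_mem_of_empty_quadrant al be q : ~ quadrant_filled rs p al be -> near e p q ->
  strictly_toward al (fst p) (fst q) -> strictly_toward be (snd p) (snd q) -> ~ P q.
Proof.
  intros Hempty Hnear Hx Hy Hq. apply Hempty.
  apply P_union in Hq; destruct Hq as [r [Hr Hq]].
  exists r; split; [exact Hr|]. split; [exact (in_rect_of_near r q Hr Hnear Hq)|].
  destruct r as [[a b] [c d]]; unfold in_rect, extends_beyond, strictly_toward in *; simpl in *.
  destruct al, be; lra.
Qed.

Lemma interior_of_filled_quadrants :
  (forall al be, quadrant_filled rs p al be) -> interiorP P p.
Proof.
  intros Hall. exists e; split; [exact e_pos|]. intros q Hx Hy.
  apply (mem_of_filled_quadrant
           (if Rle_dec (fst p) (fst q) then true else false)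
           (if Rle_dec (snd p) (snd q) then true else false)); [apply Hall | now split | |];
    unfold toward; destruct Rle_dec; lra.
Qed.

(* The boundary between a filled and an empty horizontally adjacent quadrant is
   the vertical segment of length [e / 2] leaving [p] on their common side. *)
Lemma on_vside_of_quadrants al be :
  quadrant_filled rs p al be -> ~ quadrant_filled rs p (negb al) be -> on_vside P p.
Proof.
  intros Hfull Hempty.
  exists (if be then snd p else snd p - e / 2), (if be then snd p + e / 2 else snd p).
  split; [destruct be; lra|]. split; [destruct be; lra|].
  intros t Ht; split.
  - apply closure_of_mem, (mem_of_filled_quadrant al be); [exact Hfull | | |];
      unfold near, toward; simpl; destruct al, be; try split; unfold_abs; lra.
  - apply not_interior_of_outside_points. intros eps Heps.
    assert (Hm : 0 < Rmin eps e <= eps /\ Rmin eps e <= e)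
      by (split; [split; [now apply Rmin_glb_lt | apply Rmin_l] | apply Rmin_r]).
    set (m := Rmin eps e) in Hm.
    exists (if al then fst p - m / 4 else fst p + m / 4, if be then t + m / 4 else t - m / 4).
    split.
    + apply (not_mem_of_empty_quadrant (negb al) be); [exact Hempty | | |];
        unfold near, strictly_toward; destruct al, be; simpl; try split; unfold_abs; lra.
    + unfold near; simpl; split; unfold_abs; destruct al, be; lra.
Qed.

Lemma on_hside_of_quadrants al be :
  quadrant_filled rs p al be -> ~ quadrant_filled rs p al (negb be) -> on_hside P p.
Proof.
  intros Hfull Hempty.
  exists (if al then fst p else fst p - e / 2), (if al then fst p + e / 2 else fst p).
  split; [destruct al; lra|]. split; [destruct al; lra|].
  intros t Ht; split.
  - apply closure_of_mem, (mem_of_filled_quadrant al be); [exact Hfull | | |];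
      unfold near, toward; simpl; destruct al, be; try split; unfold_abs; lra.
  - apply not_interior_of_outside_points. intros eps Heps.
    assert (Hm : 0 < Rmin eps e <= eps /\ Rmin eps e <= e)
      by (split; [split; [now apply Rmin_glb_lt | apply Rmin_l] | apply Rmin_r]).
    set (m := Rmin eps e) in Hm.
    exists (if al then t + m / 4 else t - m / 4, if be then snd p - m / 4 else snd p + m / 4).
    split.
    + apply (not_mem_of_empty_quadrant al (negb be)); [exact Hempty | | |];
        unfold near, strictly_toward; destruct al, be; simpl; try split; unfold_abs; lra.
    + unfold near; simpl; split; unfold_abs; destruct al, be; lra.
Qed.

End NearPoint.

Lemma quadrant_filled_of_in_rect r p :
  In r rs -> in_rect r p -> exists al be, quadrant_filled rs p al be.
Proof.
  intros Hr Hp. destruct (rs_nondegenerate r Hr) as [Hab Hcd].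
  exists (if Rlt_dec (fst p) (snd (fst r)) then true else false),
         (if Rlt_dec (snd p) (snd (snd r)) then true else false), r.
  split; [exact Hr|]. split; [exact Hp|].
  destruct r as [[a b] [c d]]; unfold in_rect, extends_beyond in *; simpl in *.
  split; destruct Rlt_dec; lra.
Qed.

Lemma mem_of_closure p : closureP P p -> P p.
Proof.
  intros Hc. destruct (separated_exists rs p) as [e [He Hsep]].
  destruct (Hc e He) as [q [Hq Hnear]].
  apply P_union in Hq; destruct Hq as [r [Hr Hq]].
  apply P_union; exists r; split; [exact Hr|].
  exact (in_rect_of_near p e Hsep r q Hr Hnear Hq).
Qed.

(* Among the four quadrants at a boundary point some filled one has an empty
   neighbour: otherwise all four would be filled and [p] would be interior. *)
Lemma boundary_on_side p : boundaryP P p -> on_vside P p \/ on_hside P p.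
Proof.
  intros [Hcl Hnint].
  destruct (separated_exists rs p) as [e [He Hsep]].
  assert (Hedge : exists al be, quadrant_filled rs p al be /\
            (~ quadrant_filled rs p (negb al) be \/ ~ quadrant_filled rs p al (negb be))).
  { destruct (proj1 (P_union p) (mem_of_closure p Hcl)) as [r [Hr Hp]].
    destruct (quadrant_filled_of_in_rect r p Hr Hp) as [al0 [be0 H0]].
    apply NNPP; intros Hno. apply Hnint, (interior_of_filled_quadrants p e He Hsep).
    assert (Hnb : forall al be, quadrant_filled rs p al be ->
              quadrant_filled rs p (negb al) be /\ quadrant_filled rs p al (negb be)).
    { intros al be Hq; split; apply NNPP; intros Hn; apply Hno; exists al, be; tauto. }
    intros al be.
    destruct (Hnb _ _ H0) as [H1 H2]. destruct (Hnb _ _ H1) as [_ H3].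
    destruct al, be, al0, be0; assumption. }
  destruct Hedge as [al [be [Hq [Hn|Hn]]]].
  - left; exact (on_vside_of_quadrants p e He Hsep al be Hq Hn).
  - right; exact (on_hside_of_quadrants p e He Hsep al be Hq Hn).
Qed.

Lemma interior_off_edges x y :
  ~ In x (xedges rs) -> ~ In y (yedges rs) -> P (x, y) -> interiorP P (x, y).
Proof.
  intros Hx Hy Hp. apply P_union in Hp; destruct Hp as [r [Hr Hp]].
  destruct (separated_exists rs (x, y)) as [e [He Hsep]].
  apply (interior_of_filled_quadrants _ e He Hsep). intros al be.
  exists r; split; [exact Hr|]. split; [exact Hp|].
  destruct (edges_In rs r Hr) as [[Ha Hb] [Hc Hd]].
  destruct r as [[a b] [c d]]; unfold in_rect, extends_beyond in *; simpl in *.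
  assert (a <> x) by congruence. assert (b <> x) by congruence.
  assert (c <> y) by congruence. assert (d <> y) by congruence.
  destruct al, be; split; lra.
Qed.

Lemma vside_x_in_xedges x : vside_x P x -> In x (xedges rs).
Proof.
  intros [c [d [Hcd Hb]]]. apply NNPP; intros Hx.
  destruct (exists_not_In_interval (yedges rs) c d Hcd) as [t [Ht Hy]].
  destruct (Hb t ltac:(lra)) as [Hcl Hnint].
  exact (Hnint (interior_off_edges x t Hx Hy (mem_of_closure _ Hcl))).
Qed.

Lemma hside_y_in_yedges y : hside_y P y -> In y (yedges rs).
Proof.
  intros [c [d [Hcd Hb]]]. apply NNPP; intros Hy.
  destruct (exists_not_In_interval (xedges rs) c d Hcd) as [t [Ht Hx]].
  destruct (Hb t ltac:(lra)) as [Hcl Hnint].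
  exact (Hnint (interior_off_edges t y Hx Hy (mem_of_closure _ Hcl))).
Qed.

Hypothesis rs_nonempty : rs <> nil.

Lemma vside_x_extreme s : (s = 1 \/ s = -1) ->
  exists w, vside_x P w /\ forall q, P q -> s * fst q <= s * w.
Proof.
  intros Hs.
  pose (edge (r : rect) := if Req_EM_T s 1 then snd (fst r) else fst (fst r)).
  destruct (list_argmax rs (fun r => s * edge r) rs_nonempty) as [rm [Hrm Hmax]].
  assert (Hbound : forall q, P q -> s * fst q <= s * edge rm).
  { intros q Hq; apply P_union in Hq; destruct Hq as [r [Hr Hq]].
    specialize (Hmax r Hr); simpl in Hmax; unfold edge, in_rect in *.
    destruct Req_EM_T; destruct Hs as [->| ->]; lra. }
  exists (edge rm); split; [|exact Hbound].
  destruct (rs_nondegenerate rm Hrm) as [Hab Hcd].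
  apply (vside_x_of_extreme_edge P s (edge rm) _ _ Hs Hcd); [|exact Hbound].
  intros t Ht; apply P_union; exists rm; split; [exact Hrm|].
  unfold edge, in_rect; simpl; destruct Req_EM_T; lra.
Qed.

Lemma hside_y_extreme s : (s = 1 \/ s = -1) ->
  exists w, hside_y P w /\ forall q, P q -> s * snd q <= s * w.
Proof.
  intros Hs.
  pose (edge (r : rect) := if Req_EM_T s 1 then snd (snd r) else fst (snd r)).
  destruct (list_argmax rs (fun r => s * edge r) rs_nonempty) as [rm [Hrm Hmax]].
  assert (Hbound : forall q, P q -> s * snd q <= s * edge rm).
  { intros q Hq; apply P_union in Hq; destruct Hq as [r [Hr Hq]].
    specialize (Hmax r Hr); simpl in Hmax; unfold edge, in_rect in *.
    destruct Req_EM_T; destruct Hs as [->| ->]; lra. }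
  exists (edge rm); split; [|exact Hbound].
  destruct (rs_nondegenerate rm Hrm) as [Hab Hcd].
  apply (hside_y_of_extreme_edge P s (edge rm) _ _ Hs Hab); [|exact Hbound].
  intros t Ht; apply P_union; exists rm; split; [exact Hrm|].
  unfold edge, in_rect; simpl; destruct Req_EM_T; lra.
Qed.

Lemma interior_xs_between_vsides : exists wl wr,
  vside_x P wl /\ vside_x P wr /\ forall z, interior_xs P z -> wl <= z <= wr.
Proof.
  destruct (vside_x_extreme (-1)) as [wl [Hl Hbl]]; [now right|].
  destruct (vside_x_extreme 1) as [wr [Hr Hbr]]; [now left|].
  exists wl, wr; split; [exact Hl|]; split; [exact Hr|].
  intros z [w Hz]. apply interior_mem in Hz.
  specialize (Hbl _ Hz); specialize (Hbr _ Hz); simpl in *; lra.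
Qed.

Lemma interior_ys_between_hsides : exists wl wr,
  hside_y P wl /\ hside_y P wr /\ forall z, interior_ys P z -> wl <= z <= wr.
Proof.
  destruct (hside_y_extreme (-1)) as [wl [Hl Hbl]]; [now right|].
  destruct (hside_y_extreme 1) as [wr [Hr Hbr]]; [now left|].
  exists wl, wr; split; [exact Hl|]; split; [exact Hr|].
  intros z [w Hz]. apply interior_mem in Hz.
  specialize (Hbl _ Hz); specialize (Hbr _ Hz); simpl in *; lra.
Qed.

End Polygon.

(** * Unfolding a reflected path on a line *)

(* A unit-speed motion on the real line through [Int], in [k] legs of durations
   [t i] and velocities [s i], which may reverse only at points of [V]. *)
Record reflected_path (V Int : R -> Prop) (k : nat) (x s t : nat -> R) : Prop := {
  path_nonempty : (0 < k)%nat;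
  path_start : V (x 0%nat);
  path_end : V (x k);
  path_leg : forall i, (i < k)%nat ->
    (s i = 1 \/ s i = -1) /\ 0 < t i /\ x (S i) = x i + t i * s i /\
    forall u, 0 < u < t i -> Int (x i + u * s i);
  path_turn : forall i, (0 < i < k)%nat ->
    (V (x i) /\ s i = - s (pred i)) \/ s i = s (pred i)
}.

Fixpoint tsum (t : nat -> R) (n : nat) : R :=
  match n with O => 0 | S n' => tsum t n' + t n' end.

Lemma tsum_pos t k : (0 < k)%nat -> (forall i, (i < k)%nat -> 0 < t i) -> 0 < tsum t k.
Proof.
  induction k as [|k IH]; intros Hk Ht; [lia|]. simpl.
  assert (Htk := Ht k ltac:(lia)).
  destruct k as [|k]; [simpl; lra|].
  assert (0 < tsum t (S k)) by (apply IH; [lia | intros i Hi; apply Ht; lia]). lra.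
Qed.

(* An event [(c, a)] records the point [a] with integer weight [c]; the total
   duration of a reflected path is the weighted sum of its events. *)
Definition esum (E : list (Z * R)) : R :=
  fold_right Rplus 0 (map (fun ev => IZR (fst ev) * snd ev) E).

Lemma esum_cons ev E : esum (ev :: E) = IZR (fst ev) * snd ev + esum E.
Proof. reflexivity. Qed.

(* The weight of a good event is positive if the path arrives at it from the
   left, negative if from the right. *)
Definition good_event (V Int : R -> Prop) (ev : Z * R) : Prop :=
  V (snd ev) /\ exists u, 0 < u /\ Int (snd ev - u * IZR (Z.sgn (fst ev))).

Definition zsign (s : R) : Z := if Req_EM_T s 1 then 1%Z else (-1)%Z.

Lemma IZR_zsign s : s = 1 \/ s = -1 -> IZR (zsign s) = s.
Proof. unfold zsign; destruct Req_EM_T; intros [-> | ->]; simpl; lra. Qed.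

Lemma IZR_sgn_mul_zsign m s : (0 < m)%Z -> s = 1 \/ s = -1 -> IZR (Z.sgn (m * zsign s)) = s.
Proof.
  intros Hm Hs; rewrite Z.sgn_mul, Z.sgn_pos by exact Hm.
  unfold zsign; destruct Req_EM_T; destruct Hs as [-> | ->]; simpl; lra.
Qed.

Lemma good_event_of_arrival V Int m s t a : V a -> (s = 1 \/ s = -1) -> 0 < t ->
  (forall u, 0 < u < t -> Int (a - u * s)) -> (0 < m)%Z ->
  good_event V Int ((m * zsign s)%Z, a).
Proof.
  intros Va Hs Ht HInt Hm; split; [exact Va|]. exists (t / 2); split; [lra|].
  simpl; rewrite IZR_sgn_mul_zsign by assumption. apply HInt; lra.
Qed.

Section ReflectedPath.

Variables (V Int : R -> Prop) (k : nat) (x s t : nat -> R).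
Hypothesis path : reflected_path V Int k x s t.

Lemma path_arrival i : (i < k)%nat ->
  forall u, 0 < u < t i -> Int (x (S i) - u * s i).
Proof.
  intros Hi u Hu. destruct (path_leg _ _ _ _ _ _ path i Hi) as [_ [_ [-> HInt]]].
  replace (x i + t i * s i - u * s i) with (x i + (t i - u) * s i) by ring.
  apply HInt; lra.
Qed.

Lemma path_departure : forall u, 0 < u < t 0%nat -> Int (x 0%nat - u * - s 0%nat).
Proof.
  intros u Hu. destruct (path_leg _ _ _ _ _ _ path 0 (path_nonempty _ _ _ _ _ _ path))
    as [_ [_ [_ HInt]]].
  replace (x 0%nat - u * - s 0%nat) with (x 0%nat + u * s 0%nat) by ring. auto.
Qed.

(* The departure from [x 0] weighs [- s 0], every reversal [2 s i], and a
   prefix ending after leg [j] is completed by the pending term [s j * x (S j)]. *)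
Lemma reflected_path_prefix_events j : (j < k)%nat ->
  exists E, (forall ev, In ev E -> good_event V Int ev) /\
    esum E + s j * x (S j) = tsum t (S j).
Proof.
  induction j as [|j IH]; intros Hj.
  - destruct (path_leg _ _ _ _ _ _ path 0 Hj) as [Hs [Ht [Hx _]]].
    exists (((1 * zsign (- s 0%nat))%Z, x 0%nat) :: nil); split.
    + intros ev [<-|[]]. apply (good_event_of_arrival _ _ _ _ (t 0%nat));
        [apply path_start with (1 := path) | destruct Hs as [-> | ->]; lra | exact Ht |
         exact path_departure | lia].
    + rewrite esum_cons; cbn [fst snd esum map fold_right tsum].
      rewrite Z.mul_1_l, IZR_zsign, Hx by (destruct Hs as [-> | ->]; lra).
      destruct Hs as [-> | ->]; lra.
  - destruct (IH ltac:(lia)) as [E [HE Heq]].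
    destruct (path_leg _ _ _ _ _ _ path j ltac:(lia)) as [Hsj [Htj _]].
    destruct (path_leg _ _ _ _ _ _ path (S j) Hj) as [_ [_ [Hx _]]].
    destruct (path_turn _ _ _ _ _ _ path (S j) ltac:(lia)) as [[Vj Hturn]|Hstraight];
      simpl in *.
    + exists (((2 * zsign (s j))%Z, x (S j)) :: E); split.
      * intros ev [<-|Hev]; [|auto].
        exact (good_event_of_arrival _ _ 2 _ _ _ Vj Hsj Htj (path_arrival j ltac:(lia))
                 ltac:(lia)).
      * rewrite esum_cons; cbn [fst snd tsum].
        rewrite mult_IZR, IZR_zsign, Hx, Hturn by exact Hsj.
        destruct Hsj as [E1|E1]; rewrite E1 in *; lra.
    + exists E; split; [exact HE|]. cbn [tsum].
      rewrite Hx, Hstraight. destruct Hsj as [E1|E1]; rewrite E1 in *; lra.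
Qed.

Lemma reflected_path_events :
  exists E, (forall ev, In ev E -> good_event V Int ev) /\ esum E = tsum t k.
Proof.
  pose proof (path_nonempty _ _ _ _ _ _ path) as Hk.
  destruct (reflected_path_prefix_events (pred k) ltac:(lia)) as [E [HE Heq]].
  destruct (path_leg _ _ _ _ _ _ path (pred k) ltac:(lia)) as [Hs [Ht _]].
  replace (S (pred k)) with k in * by lia.
  exists (((1 * zsign (s (pred k)))%Z, x k) :: E); split.
  - intros ev [<-|Hev]; [|auto].
    apply (good_event_of_arrival _ _ _ _ (t (pred k))); [| exact Hs | exact Ht | | lia].
    + apply path_end with (1 := path).
    + intros u Hu. pose proof (path_arrival (pred k) ltac:(lia) u Hu) as Harr.
      now replace (S (pred k)) with k in Harr by lia.
  - rewrite esum_cons; cbn [fst snd].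
    rewrite Z.mul_1_l, IZR_zsign by exact Hs. lra.
Qed.

Lemma reflected_path_duration_pos : 0 < tsum t k.
Proof.
  apply tsum_pos; [exact (path_nonempty _ _ _ _ _ _ path)|].
  intros i Hi; apply (path_leg _ _ _ _ _ _ path i Hi).
Qed.

End ReflectedPath.

(** * Folding the events onto nonnegative coordinates *)

Lemma zsum_cons f v l : zsum f (v :: l) = IZR (f v) * v + zsum f l.
Proof. reflexivity. Qed.

Lemma zsum_lincomb (h f g : R -> Z) c d l : (forall x, h x = c * f x + d * g x)%Z ->
  zsum h l = IZR c * zsum f l + IZR d * zsum g l.
Proof.
  intros Hh; induction l as [|v l IH]; [unfold zsum; simpl; ring|].
  rewrite !zsum_cons, IH, Hh, plus_IZR, !mult_IZR; ring.
Qed.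

Lemma zsum_nonzero f l : zsum f l <> 0 -> exists x, In x l /\ f x <> 0%Z.
Proof.
  induction l as [|v l IH]; intros Hs; [now contradict Hs|].
  rewrite zsum_cons in Hs. destruct (Z.eq_dec (f v) 0) as [Hv|Hv].
  - rewrite Hv, Rmult_0_l, Rplus_0_l in Hs.
    destruct (IH Hs) as [x [Hx Hfx]]. exists x; split; [now right | exact Hfx].
  - exists v; split; [now left | exact Hv].
Qed.

Definition indicator (a x : R) : Z := if Req_EM_T a x then 1%Z else 0%Z.

Lemma zsum_indicator_notin a l : ~ In a l -> zsum (indicator a) l = 0.
Proof.
  induction l as [|v l IH]; intros Ha; [reflexivity|].
  rewrite zsum_cons, IH by (intros H; apply Ha; now right).
  unfold indicator; destruct Req_EM_T as [<-|]; [exfalso; apply Ha; now left | simpl; ring].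
Qed.

Lemma zsum_indicator_in a l : NoDup l -> In a l -> zsum (indicator a) l = a.
Proof.
  induction l as [|v l IH]; intros Hnd Ha; [destruct Ha|].
  apply NoDup_cons_iff in Hnd; destruct Hnd as [Hv Hnd].
  rewrite zsum_cons; unfold indicator at 1; destruct Req_EM_T as [<-|Hne].
  - rewrite zsum_indicator_notin by exact Hv. simpl; ring.
  - destruct Ha as [<-|Ha]; [congruence|]. rewrite IH by assumption. simpl; ring.
Qed.

(* The event at [a] contributes to the coordinate [Rabs a], with the sign of [a]. *)
Definition mirror_delta (a x : R) : Z := (indicator a x - indicator (- a) x)%Z.

Lemma zsum_mirror_delta a l : NoDup l -> (forall x, In x l -> 0 < x) ->
  (a <> 0 -> In (Rabs a) l) -> zsum (mirror_delta a) l = a.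
Proof.
  intros Hnd Hpos Ha.
  rewrite (zsum_lincomb _ (indicator a) (indicator (- a)) 1 (-1))
    by (intros; unfold mirror_delta; ring).
  assert (Hnotin : forall y, y <= 0 -> ~ In y l)
    by (intros y Hy Hin; specialize (Hpos _ Hin); lra).
  destruct (Rtotal_order a 0) as [Hlt|[->|Hgt]].
  - rewrite Rabs_left in Ha by exact Hlt.
    rewrite zsum_indicator_notin, zsum_indicator_in by first [exact Hnd | apply Ha; lra | apply Hnotin; lra].
    simpl; ring.
  - rewrite Ropp_0, zsum_indicator_notin by (apply Hnotin; lra). ring.
  - rewrite Rabs_right in Ha by lra.
    rewrite zsum_indicator_in, zsum_indicator_notin by first [exact Hnd | apply Ha; lra | apply Hnotin; lra].
    simpl; ring.
Qed.

Fixpoint event_coeff (E : list (Z * R)) : R -> Z :=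
  match E with
  | nil => fun _ => 0%Z
  | ev :: E' => fun x => (fst ev * mirror_delta (snd ev) x + event_coeff E' x)%Z
  end.

Lemma zsum_event_coeff E l : NoDup l -> (forall x, In x l -> 0 < x) ->
  (forall ev, In ev E -> snd ev <> 0 -> In (Rabs (snd ev)) l) ->
  zsum (event_coeff E) l = esum E.
Proof.
  intros Hnd Hpos; induction E as [|ev E IH]; intros HE.
  - rewrite (zsum_lincomb _ (fun _ => 0%Z) (fun _ => 0%Z) 0 0) by reflexivity.
    unfold esum; simpl; ring.
  - rewrite (zsum_lincomb _ (mirror_delta (snd ev)) (event_coeff E) (fst ev) 1)
      by (intros; cbn [event_coeff]; ring).
    rewrite zsum_mirror_delta, IH by first [exact Hnd | exact Hpos |
      intros; apply HE; simpl; auto].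
    rewrite esum_cons; simpl; ring.
Qed.

Lemma event_coeff_nonneg E z :
  (forall ev, In ev E -> 0 <= fst ev * mirror_delta (snd ev) z)%Z -> (0 <= event_coeff E z)%Z.
Proof.
  induction E as [|ev E IH]; intros HE; simpl; [lia|].
  specialize (HE ev (or_introl eq_refl)) as Hev.
  assert (0 <= event_coeff E z)%Z by (apply IH; intros; apply HE; now right). lia.
Qed.

Definition nonneg_part (V : R -> Prop) (x : R) : Prop := 0 <= x /\ V x.
Definition neg_mirror (V : R -> Prop) (x : R) : Prop := exists x', x' < 0 /\ V x' /\ x = - x'.

Section Folding.

Variables (V Int : R -> Prop) (wl wr : R).
Hypotheses (Vwl : V wl) (Vwr : V wr) (Int_between : forall z, Int z -> wl <= z <= wr).

(* At the rightmost nonnegative side every event is approached from the left. *)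
Lemma good_event_weight_at_max xp ev :
  is_max0 (nonneg_part V) xp -> ~ neg_mirror V xp -> good_event V Int ev ->
  (0 <= fst ev * mirror_delta (snd ev) xp)%Z.
Proof.
  intros Hmax Hnm [Va [u [Hu HInt]]]. destruct ev as [c a]; simpl in *.
  assert (Hxp : 0 <= xp) by (destruct Hmax as [[[H _] _]|[_ ->]]; lra).
  unfold mirror_delta, indicator.
  destruct (Req_EM_T a xp) as [Ha|Ha]; destruct (Req_EM_T (- a) xp) as [Hm|Hm]; try lia.
  - subst a; destruct c as [|c|c]; try lia. exfalso.
    simpl in HInt; specialize (Int_between _ HInt).
    destruct Hmax as [[_ Hle]|[Hno _]].
    + assert (Hwr : 0 <= wr) by lra. specialize (Hle wr (conj Hwr Vwr)); lra.
    + apply (Hno wr); split; [lra | exact Vwr].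
  - exfalso; apply Hnm. exists a; repeat split; [|exact Va|lra].
    lra.
Qed.

Lemma good_event_weight_at_min xm ev :
  is_max0 (neg_mirror V) xm -> ~ nonneg_part V xm -> good_event V Int ev ->
  (0 <= fst ev * mirror_delta (snd ev) xm)%Z.
Proof.
  intros Hmax Hnn [Va [u [Hu HInt]]]. destruct ev as [c a]; simpl in *.
  assert (Hxm : 0 <= xm) by (destruct Hmax as [[[x' [H [_ ->]]] _]|[_ ->]]; lra).
  unfold mirror_delta, indicator.
  destruct (Req_EM_T a xm) as [Ha|Ha]; destruct (Req_EM_T (- a) xm) as [Hm|Hm]; try lia.
  - exfalso; apply Hnn; split; [exact Hxm | now rewrite <- Ha].
  - destruct c as [|c|c]; try lia. exfalso.
    simpl in HInt; specialize (Int_between _ HInt).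
    destruct Hmax as [[_ Hle]|[Hno _]].
    + specialize (Hle (- wl) ltac:(exists wl; repeat split; [lra | exact Vwl])); lra.
    + apply (Hno (- wl)); exists wl; repeat split; [lra | exact Vwl].
Qed.

Lemma reflected_path_coefficients k x s t xp xm lx :
  reflected_path V Int k x s t ->
  is_max0 (nonneg_part V) xp -> is_max0 (neg_mirror V) xm ->
  ~ neg_mirror V xp -> ~ nonneg_part V xm ->
  NoDup lx -> (forall z, In z lx <-> (nonneg_part V z \/ neg_mirror V z) /\ z <> 0) ->
  exists n, zsum n lx = tsum t k /\ (0 <= n xp)%Z /\ (0 <= n xm)%Z.
Proof.
  intros Hpath Hxp Hxm Nxp Nxm Hnd Hlx.
  destruct (reflected_path_events V Int k x s t Hpath) as [E [HE Hsum]].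
  exists (event_coeff E); split; [|split].
  - rewrite <- Hsum. apply zsum_event_coeff; [exact Hnd | |].
    + intros z Hz; apply Hlx in Hz; destruct Hz as [[[Hz _]|[z' [Hz' [_ ->]]]] Hne]; lra.
    + intros ev Hev Hne; destruct (HE ev Hev) as [Va _]; apply Hlx; split.
      * destruct (Rle_dec 0 (snd ev)).
        -- left; rewrite Rabs_right by lra; split; [lra | exact Va].
        -- right; rewrite Rabs_left by lra; exists (snd ev); repeat split; [lra | exact Va].
      * exact (Rabs_no_R0 _ Hne).
  - apply event_coeff_nonneg; intros ev Hev.
    exact (good_event_weight_at_max xp ev Hxp Nxp (HE ev Hev)).
  - apply event_coeff_nonneg; intros ev Hev.
    exact (good_event_weight_at_min xm ev Hxm Nxm (HE ev Hev)).
Qed.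

End Folding.

Lemma vside_x_of_on_vside P p : on_vside P p -> vside_x P (fst p).
Proof. intros [c [d [Hcd [_ H]]]]; now exists c, d. Qed.

Lemma hside_y_of_on_hside P p : on_hside P p -> hside_y P (snd p).
Proof. intros [a [b [Hab [_ H]]]]; now exists a, b. Qed.

Lemma XP_list P : is_RP P -> exists lx, NoDup lx /\ forall x, In x lx <-> XP P x /\ x <> 0.
Proof.
  intros [rs [_ [_ HP]]].
  apply (list_of_finite_pred (xedges rs ++ map Ropp (xedges rs))).
  intros x [[[_ Hv]|[x' [_ [Hv ->]]]] _]; apply in_or_app;
    [left | right; apply in_map]; exact (vside_x_in_xedges P rs HP _ Hv).
Qed.

Lemma YP_list P : is_RP P -> exists ly, NoDup ly /\ forall y, In y ly <-> YP P y /\ y <> 0.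
Proof.
  intros [rs [_ [_ HP]]].
  apply (list_of_finite_pred (yedges rs ++ map Ropp (yedges rs))).
  intros y [[[_ Hh]|[y' [_ [Hh ->]]]] _]; apply in_or_app;
    [left | right; apply in_map]; exact (hside_y_in_yedges P rs HP _ Hh).
Qed.

Lemma resonant_reflected_paths P : is_RP P -> resonant P ->
  exists k t x sx y sy,
    reflected_path (vside_x P) (interior_xs P) k x sx t /\
    reflected_path (hside_y P) (interior_ys P) k y sy t.
Proof.
  intros [rs [_ [Hrs HP]]] [k [p [sx [sy [Hk [[Cv0 Ch0] [[Cvk Chk] [Hleg Hmid]]]]]]]].
  pose (t i := (fst (p (S i)) - fst (p i)) * sx i).
  assert (Hleg' : forall i, (i < k)%nat ->
    (sx i = 1 \/ sx i = -1) /\ (sy i = 1 \/ sy i = -1) /\ 0 < t i /\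
    p (S i) = (fst (p i) + t i * sx i, snd (p i) + t i * sy i) /\
    forall u, 0 < u < t i -> interiorP P (fst (p i) + u * sx i, snd (p i) + u * sy i)).
  { intros i Hi. destruct (Hleg i Hi) as [Hsx [Hsy [t0 [Ht0 [Hp Hu]]]]].
    replace (t i) with t0
      by (unfold t; rewrite Hp; simpl; destruct Hsx as [-> | ->]; ring).
    repeat split; assumption. }
  exists k, t, (fun i => fst (p i)), sx, (fun i => snd (p i)), sy; split; constructor;
    simpl; try assumption.
  - now apply vside_x_of_on_vside.
  - now apply vside_x_of_on_vside.
  - intros i Hi; destruct (Hleg' i Hi) as [Hs [_ [Ht [-> Hu]]]].
    repeat split; try assumption. intros u Hux; exists (snd (p i) + u * sy i); auto.
  - intros i Hi; destruct (Hmid i Hi) as [Hb [_ [Hv Hh]]].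
    destruct (boundary_on_side P rs Hrs HP (p i) Hb) as [Hpv|Hph].
    + left; split; [now apply vside_x_of_on_vside | apply Hv, Hpv].
    + right; apply Hh, Hph.
  - now apply hside_y_of_on_hside.
  - now apply hside_y_of_on_hside.
  - intros i Hi; destruct (Hleg' i Hi) as [_ [Hs [Ht [-> Hu]]]].
    repeat split; try assumption. intros u Huy; exists (fst (p i) + u * sx i); auto.
  - intros i Hi; destruct (Hmid i Hi) as [Hb [_ [Hv Hh]]].
    destruct (boundary_on_side P rs Hrs HP (p i) Hb) as [Hpv|Hph].
    + right; apply Hv, Hpv.
    + left; split; [now apply hside_y_of_on_hside | apply Hh, Hph].
Qed.

Theorem theorem4p1 (P : pt -> Prop) (xp xm yp ym : R) :
  is_RP P ->
  is_max0 (XPp P) xp -> is_max0 (XPm P) xm ->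
  is_max0 (YPp P) yp -> is_max0 (YPm P) ym ->
  ~ XPm P xp -> ~ XPp P xm -> ~ YPm P yp -> ~ YPp P ym ->
  (forall (lx ly : list R) (n m : R -> Z),
     NoDup lx -> (forall x, In x lx <-> XP P x /\ x <> 0) ->
     NoDup ly -> (forall y, In y ly <-> YP P y /\ y <> 0) ->
     ((exists x, In x lx /\ n x <> 0%Z) \/ (exists y, In y ly /\ m y <> 0%Z)) ->
     (xp <> 0 -> xm <> 0 -> (0 <= n xp * n xm)%Z) ->
     (yp <> 0 -> ym <> 0 -> (0 <= m yp * m ym)%Z) ->
     zsum n lx - zsum m ly <> 0) ->
  ~ resonant P.
Proof.
  intros HRP Hxp Hxm Hyp Hym Nxp Nxm Nyp Nym Hsum Hres.
  destruct (resonant_reflected_paths P HRP Hres) as [k [t [x [sx [y [sy [Hx Hy]]]]]]].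
  destruct (XP_list P HRP) as [lx [Hndx Hlx]].
  destruct (YP_list P HRP) as [ly [Hndy Hly]].
  destruct HRP as [rs [Hne [Hrs HP]]].
  destruct (interior_xs_between_vsides P rs Hrs HP Hne) as [xl [xr [Vxl [Vxr Hxb]]]].
  destruct (interior_ys_between_hsides P rs Hrs HP Hne) as [yl [yr [Vyl [Vyr Hyb]]]].
  destruct (reflected_path_coefficients _ _ _ _ Vxl Vxr Hxb k x sx t xp xm lx Hx
              Hxp Hxm Nxp Nxm Hndx Hlx) as [n [Hn [Hnp Hnm]]].
  destruct (reflected_path_coefficients _ _ _ _ Vyl Vyr Hyb k y sy t yp ym ly Hy
              Hyp Hym Nyp Nym Hndy Hly) as [m [Hm [Hmp Hmm]]].
  pose proof (reflected_path_duration_pos _ _ _ _ _ _ Hx) as Hpos.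
  apply (Hsum lx ly n m Hndx Hlx Hndy Hly).
  - left; apply zsum_nonzero; lra.
  - intros _ _; now apply Z.mul_nonneg_nonneg.
  - intros _ _; now apply Z.mul_nonneg_nonneg.
  - rewrite Hn, Hm; ring.
Qed.
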